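(* Suppose $\pi$ is an irreducible permutation on a finite alphabet $\mathcal{A}$ with $\pi=\pi^{-1}$. Then $\pi$ is Lagrangian, i.e. $H^\pi_V=\{x\in H^\pi:\omega(x,y)=0\text{ for all }y\in H^\pi_V\}$.
   Context: Let $\pi=(\pi_0,\pi_1)$ with bijections $\pi_\varepsilon:\mathcal{A}\to\{1,\dots,d\}$, irreducible (no $k<d$ with $\pi_0^{-1}(\{1..k\})=\pi_1^{-1}(\{1..k\})$); $\pi^{-1}=(\pi_1,\pi_0)$, and $\pi=\pi^{-1}$ means $\pi_1\circ\pi_0^{-1}$ is an involution. Define $\Omega=\Omega_\pi$ by $\Omega_{\alpha,\beta}=1$ if $\pi_0(\alpha)<\pi_0(\beta)$ and $\pi_1(\alpha)>\pi_1(\beta)$, $-1$ if $\pi_0(\alpha)>\pi_0(\beta)$ and $\pi_1(\alpha)<\pi_1(\beta)$, $0$ otherwise. Let $H^\pi=\Omega\mathbb{R}^{\mathcal{A}}$ with symplectic form $\omega(\Omega u,\Omega v)=u^t\Omega v$. Let $\pi_{\mathcal{A}}=\pi_0^{-1}\circ\pi_1$, $\mathbf{e}_{\mathcal{B}}=\sum_{\alpha\in\mathcal{B}}\mathbf{e}_\alpha$, $\mathbf{v}_{\mathcal{B}}=\Omega\mathbf{e}_{\mathcal{B}}$, and $H^\pi_V=\mathrm{span}\{\mathbf{v}_{\mathcal{B}}:\mathcal{B}\text{ an orbit of }\pi_{\mathcal{A}}\}$. *)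

From HB Require Import structures.
From mathcomp Require Import all_boot all_order all_algebra.
Set Implicit Arguments. Unset Strict Implicit. Unset Printing Implicit Defensive.
Import Order.TTheory GRing.Theory Num.Theory.
Local Open Scope ring_scope.

(* Letters are indexed by a finType A; positions {1,..,d} are encoded as 'I_n
   (0-based, n = d = #|A| forced by bijectivity). *)
Section Defs.
Variables (A : finType) (n : nat) (pi0 pi1 : A -> 'I_n).

(* irreducible: no k with 1 <= k < d (1-based) such that
   pi0^{-1}{1..k} = pi1^{-1}{1..k}.  In 0-based terms {1..k} = {i | i < k}. *)
Definition irreducible_perm : Prop :=
  forall k : nat, (0 < k)%N -> (k < n)%N ->
    [set a | (pi0 a < k)%N] != [set a | (pi1 a < k)%N].

(* pi = pi^{-1}: sigma := pi1 \o pi0^{-1} is an involution, i.e.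
   for all i, sigma (sigma i) = i, spelled out with the preimages under pi0. *)
Definition perm_self_inverse : Prop :=
  forall (i : 'I_n) (a b : A), pi0 a = i -> pi0 b = pi1 a -> pi1 b = i.

(* pi_A = pi0^{-1} \o pi1 (the default value is never used when pi0 is onto). *)
Definition piA (a : A) : A := odflt a [pick b | pi0 b == pi1 a].

Variable R : realFieldType.

Definition Omega (a b : A) : R :=
  if ((pi0 a < pi0 b)%N && (pi1 a > pi1 b)%N) then 1
  else if ((pi0 a > pi0 b)%N && (pi1 a < pi1 b)%N) then -1
  else 0.

Definition Omega_mul (u : {ffun A -> R}) : {ffun A -> R} :=
  [ffun a => \sum_b Omega a b * u b].

Definition omega_form (u v : {ffun A -> R}) : R :=
  \sum_a \sum_b u a * Omega a b * v b.

Definition e_set (B : {set A}) : {ffun A -> R} := [ffun a => if a \in B then 1 else 0].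
Definition v_set (B : {set A}) : {ffun A -> R} := Omega_mul (e_set B).

Definition orbitA (a : A) : {set A} := [set b | fconnect piA a b].

Definition Hpi (x : {ffun A -> R}) : Prop := exists u, x = Omega_mul u.

Definition HV (x : {ffun A -> R}) : Prop :=
  exists c : {set A} -> R,
    x = [ffun a => \sum_(B in [set orbitA a | a : A]) c B * v_set B a].

End Defs.

From HB Require Import structures.
From mathcomp Require Import all_boot all_order all_algebra.
From mathcomp Require Import ring lra.
Import Order.TTheory GRing.Theory Num.Theory.
Set Implicit Arguments.
Unset Strict Implicit.
Unset Printing Implicit Defensive.
Local Open Scope ring_scope.

(* Since pi = pi^{-1}, the map pi_A is an involution of the alphabet and
   Omega(pi_A a, pi_A b) = - Omega(a, b).  The span H_V is exactly Omega applied
   to the pi_A-invariant vectors, and reindexing by pi_A shows that omega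
   vanishes on pairs of such vectors, so H_V is isotropic.  Conversely, split
   u = u_even + u_odd with respect to pi_A: z := Omega u_odd is again
   invariant, and if Omega u is omega-orthogonal to H_V then
   0 = omega(u, z) = - sum_a z_a^2, so Omega u = Omega u_even lies in H_V. *)

Section Lagrangian.
Variables (R : realFieldType) (A : finType) (n : nat) (pi0 pi1 : A -> 'I_n).

Local Notation t := (piA pi0 pi1).
Local Notation Om := (Omega pi0 pi1 R).
Local Notation Omul := (@Omega_mul A n pi0 pi1 R).
Local Notation form := (@omega_form A n pi0 pi1 R).
Local Notation orbit := (orbitA pi0 pi1).

Lemma Omega_antisym a b : Om b a = - Om a b.
Proof.
rewrite /Omega.
by case: (ltngtP (pi0 a) (pi0 b)); case: (ltngtP (pi1 a) (pi1 b));
  rewrite ?oppr0 ?opprK.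
Qed.

Lemma omega_formE u v : form u v = \sum_a u a * Omul v a.
Proof.
apply: eq_bigr => a _; rewrite ffunE mulr_sumr.
by apply: eq_bigr => b _; rewrite mulrA.
Qed.

Lemma omega_form_antisym u v : form u v = - form v u.
Proof.
rewrite /omega_form exchange_big -sumrN; apply: eq_bigr => a _.
rewrite -sumrN; apply: eq_bigr => b _; rewrite (Omega_antisym a b); ring.
Qed.

(* omega is well defined on H^pi = Omega R^A. *)
Lemma omega_form_Omega_mul u u' v v' :
  Omul u = Omul u' -> Omul v = Omul v' -> form u v = form u' v'.
Proof.
move=> eq_u eq_v.
rewrite omega_formE eq_v -omega_formE omega_form_antisym omega_formE eq_u.
by rewrite -omega_formE -omega_form_antisym.
Qed.

Hypotheses (pi0_bij : bijective pi0) (pi_selfinv : perm_self_inverse pi0 pi1).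

Lemma pi0_piA a : pi0 (t a) = pi1 a.
Proof.
rewrite /piA; case: pickP => [b /eqP //| no_preimage].
case: pi0_bij => g _ pi0K.
by have := no_preimage (g (pi1 a)); rewrite pi0K eqxx.
Qed.

Lemma pi1_piA a : pi1 (t a) = pi0 a.
Proof. exact: pi_selfinv (pi0_piA a). Qed.

Lemma piAK : involutive t.
Proof. by move=> a; apply: (bij_inj pi0_bij); rewrite pi0_piA pi1_piA. Qed.

Lemma piA_inj : injective t.
Proof. exact: inv_inj piAK. Qed.

Lemma Omega_piA a b : Om (t a) (t b) = - Om a b.
Proof.
rewrite /Omega !pi0_piA !pi1_piA.
by case: (ltngtP (pi0 a) (pi0 b)); case: (ltngtP (pi1 a) (pi1 b));
  rewrite ?oppr0 ?opprK.
Qed.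

Definition piA_invariant (w : {ffun A -> R}) := forall a, w (t a) = w a.

Lemma omega_form_invariant w w' :
  piA_invariant w -> piA_invariant w' -> form w w' = 0.
Proof.
move=> w_inv w'_inv.
have form_opp : form w w' = - form w w'.
  rewrite {1}/omega_form (reindex_inj piA_inj) -sumrN; apply: eq_bigr => a _.
  rewrite (reindex_inj piA_inj) -sumrN; apply: eq_bigr => b _.
  rewrite Omega_piA w_inv w'_inv; ring.
lra.
Qed.

Lemma Omega_mul_anti_invariant (u : {ffun A -> R}) :
  (forall a, u (t a) = - u a) -> piA_invariant (Omul u).
Proof.
move=> u_anti a; rewrite !ffunE (reindex_inj piA_inj).
by apply: eq_bigr => b _; rewrite Omega_piA u_anti mulrNN.
Qed.

Lemma orbitA_piA c a : (t a \in orbit c) = (a \in orbit c).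
Proof. by rewrite !inE -same_fconnect1_r //; exact: piA_inj. Qed.

Lemma orbitA_eq a b : b \in orbit a -> orbit a = orbit b.
Proof.
rewrite inE => ab; apply/setP => c; rewrite !inE.
apply/idP/idP => [ac | bc]; last exact: connect_trans ab bc.
by apply: connect_trans ac; rewrite fconnect_sym //; exact: piA_inj.
Qed.

Lemma invariant_orbit_const w a b :
  piA_invariant w -> b \in orbit a -> w b = w a.
Proof.
move=> w_inv; rewrite inE => /iter_findex <-.
by elim: (findex _ _ _) => //= k IH; rewrite w_inv.
Qed.

(* A vector of H_V with orbit coefficients c is Omega applied to the
   invariant vector taking the value c B on the orbit B. *)
Lemma HV_invariantE x :
  HV pi0 pi1 x <-> exists2 w, piA_invariant w & x = Omul w.
Proof.
split=> [[c ->] | [w w_inv ->]].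
  exists [ffun b => \sum_(B in [set orbit a | a : A]) c B * e_set R B b].
    move=> a; rewrite !ffunE; apply: eq_bigr => B /imsetP [a0 _ ->].
    by rewrite !ffunE orbitA_piA.
  apply/ffunP => a; rewrite !ffunE.
  under [RHS]eq_bigr do rewrite ffunE mulr_sumr.
  rewrite exchange_big; apply: eq_bigr => B _; rewrite ffunE mulr_sumr.
  by apply: eq_bigr => b _; ring.
exists (fun B : {set A} => if [pick b in B] is Some b then w b else 0).
apply/ffunP => a; rewrite !ffunE; symmetry.
under eq_bigr do rewrite /v_set ffunE mulr_sumr.
rewrite exchange_big; apply: eq_bigr => b _.
under eq_bigr do rewrite mulrCA.
rewrite -mulr_sumr; congr (_ * _).
have orbit_b : orbit b \in [set orbit a0 | a0 : A] by apply: imset_f.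
rewrite (bigD1 _ orbit_b) /= big1 ?addr0.
  rewrite ffunE inE connect0 mulr1.
  case: pickP => [b' b'_in | no_elt]; first exact: invariant_orbit_const.
  by have := no_elt b; rewrite inE connect0.
move=> B /andP [/imsetP [a0 _ ->] neq_B]; rewrite ffunE.
case: ifP => b_in; last by rewrite mulr0.
by rewrite (orbitA_eq b_in) eqxx in neq_B.
Qed.

Definition even_part (u : {ffun A -> R}) := [ffun a => (u a + u (t a)) / 2].
Definition odd_part (u : {ffun A -> R}) := [ffun a => (u a - u (t a)) / 2].

Lemma Omega_mul_even_odd u a :
  Omul u a = Omul (even_part u) a + Omul (odd_part u) a.
Proof.
rewrite !ffunE -big_split /=; apply: eq_bigr => b _.
by rewrite !ffunE; field.
Qed.

Lemma even_part_invariant u : piA_invariant (even_part u).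
Proof. by move=> a; rewrite !ffunE piAK addrC. Qed.

Lemma odd_part_anti u a : odd_part u (t a) = - odd_part u a.
Proof. by rewrite !ffunE piAK; field. Qed.

Lemma isotropic_in_HV u :
  (forall w, piA_invariant w -> form u w = 0) -> HV pi0 pi1 (Omul u).
Proof.
move=> u_isotropic.
set z := Omul (odd_part u).
have z_inv : piA_invariant z by apply: Omega_mul_anti_invariant; exact: odd_part_anti.
have sum_sq : \sum_a z a * z a = 0.
  have := u_isotropic z z_inv.
  rewrite omega_form_antisym omega_formE.
  under eq_bigr do rewrite Omega_mul_even_odd mulrDr.
  rewrite big_split /= -omega_formE omega_form_invariant ?add0r //.
    by move/eqP; rewrite oppr_eq0 => /eqP.
  exact: even_part_invariant.
have z0 a : z a = 0.
  have /eqP := @psumr_eq0P _ _ predT (fun b => z b * z b)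
    (fun b _ => sqr_ge0 (z b)) sum_sq a isT.
  by rewrite mulf_eq0 orbb => /eqP.
apply/HV_invariantE; exists (even_part u); first exact: even_part_invariant.
by apply/ffunP => a; rewrite Omega_mul_even_odd -/z z0 addr0.
Qed.

End Lagrangian.

Theorem mainTheorem8 (R : realFieldType) (A : finType) (n : nat)
    (pi0 pi1 : A -> 'I_n) :
  bijective pi0 -> bijective pi1 ->
  irreducible_perm pi0 pi1 ->
  perm_self_inverse pi0 pi1 ->
  forall x : {ffun A -> R},
    HV pi0 pi1 x <->
    (Hpi pi0 pi1 x /\
     forall y : {ffun A -> R}, HV pi0 pi1 y ->
       forall u v : {ffun A -> R},
         x = Omega_mul pi0 pi1 u -> y = Omega_mul pi0 pi1 v ->
         omega_form pi0 pi1 u v = 0).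
Proof.
move=> pi0_bij _ _ pi_selfinv x; split.
  case/(HV_invariantE pi0_bij pi_selfinv) => w w_inv ->; split; first by exists w.
  move=> y /(HV_invariantE pi0_bij pi_selfinv) [w' w'_inv ->] u v xE yE.
  rewrite (omega_form_Omega_mul (u' := w) (v' := w')) //.
  exact: omega_form_invariant.
case=> [[u ->] isotropic]; apply: isotropic_in_HV => // w w_inv.
apply: (isotropic (Omega_mul pi0 pi1 w)) => //.
by apply/(HV_invariantE pi0_bij pi_selfinv); exists w.
Qed.
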